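(* Let $\mathcal A\subset\mathbb R^n$ be compact with diameter $D_{\mathcal A}<\infty$, let $\mathcal X=\mathrm{conv}(\mathcal A)$, let $f$ have $L$-Lipschitz gradient, and let $\eta\in(1,2)$. Run the AC-FW algorithm with the away-step Frank-Wolfe subroutine and a damping sequence satisfying Condition (D), with $L_0>0$. Then the subroutine satisfies parts (i) and (ii) of Condition (S); more precisely, for every $t\ge0$, $$|\mathcal G\cap\mathcal I_\eta\cap[t]|\ge\frac{t+1}{2}-\left\lfloor\log_\eta\!\left(\frac{L}{rL_0}\right)\right\rfloor.$$ If additionally $f$ is convex, then part (iii) of Condition (S) holds with $R=1$.
   Context: $D_{\mathcal A}:=\sup_{x,y\in\mathcal A}\|x-y\|_2$; $f:\mathbb R^n\to\mathbb R$ is differentiable with $\|\nabla f(x)-\nabla f(y)\|_2\le L\|x-y\|_2$. $x^\star$ is an optimal solution of $\min_{x\in\mathcal X}f(x)$. For $x\ne y$, $\ell(x,y):=2|f(y)-f(x)-\nabla f(x)^\top(y-x)|/\|y-x\|_2^2$, $\ell(x,x):=0$. AC-FW algorithm: given $\{r_t\}_{t\ge0}$ and a subroutine, pick $x_{-1}\in\mathcal A$, $x_0\in\arg\min_{v\in\mathcal A}\nabla f(x_{-1})^\top v$, $L_0:=\ell(x_{-1},x_0)$. For $t=0,1,\dots$: $v_t\in\arg\min_{v\in\mathcal A}\nabla f(x_t)^\top v$; the subroutine returns $(d_t,\gamma_t^{\max})$; $\gamma_t:=\min\{\nabla f(x_t)^\top d_t/(L_t\|d_t\|_2^2),\gamma_t^{\max}\}$;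 $\bar x_{t+1}:=x_t-\gamma_td_t$; $L_{t+1}:=\max\{\ell(x_t,\bar x_{t+1}),r_tL_t\}$; $x_{t+1}:=\bar x_{t+1}$ if $f(\bar x_{t+1})<f(x_t)$, else $x_{t+1}:=x_t$. Away-step Frank-Wolfe subroutine: it maintains weights $\alpha_{s,t}\ge0$ ($s\in\mathcal A$), active set $\mathcal S_t:=\{s:\alpha_{s,t}>0\}$, $x_t=\sum_s\alpha_{s,t}s$, initially $\mathcal S_0=\{x_0\}$, $\alpha_{x_0,0}=1$. At iteration $t$: $s_t\in\arg\max_{s\in\mathcal S_t}\nabla f(x_t)^\top s$. If $\nabla f(x_t)^\top(x_t-v_t)\ge\nabla f(x_t)^\top(s_t-x_t)$ (FW step): $d_t:=x_t-v_t$, $\gamma_t^{\max}:=1$; otherwise (away step): $d_t:=s_t-x_t$, $\gamma_t^{\max}:=\alpha_{s_t,t}/(1-\alpha_{s_t,t})$. If $x_{t+1}=x_t$, weights are unchanged; if an FW step is accepted, $\alpha_{s,t+1}:=(1-\gamma_t)\alpha_{s,t}+\gamma_t\mathbf 1\{s=v_t\}$; if an away step is accepted, $\alpha_{s,t+1}:=(1+\gamma_t)\alpha_{s,t}-\gamma_t\mathbf 1\{s=s_t\}$. Then $\mathcal S_{t+1}:=\{s:\alpha_{s,t+1}>0\}$. $[t]:=\{0,\dots,t\}$; $\mathcal I_\eta:=\{t\ge0:L_{t+1}\le\eta L_t\}$; $\mathcal G:=\{t\ge0:\gamma_t^{\max}\ge1\text{ or }\gamma_t<\gamma_t^{\max}\}$.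 Condition (D): $r_t\in(0,1]$ for all $t$ and $r:=\prod_{t\ge0}r_t\in(0,1]$. Condition (S): for all $t\ge0$: (i) $\|d_t\|_2\le D_{\mathcal A}$ and $x_t-\gamma d_t\in\mathcal X$ for all finite $\gamma\in[0,\gamma_t^{\max}]$; (ii) $\mathcal G$ is infinite; (iii) if $f$ is convex, there is $R\ge1$ independent of $t$ with $\nabla f(x_t)^\top d_t\ge(f(x_t)-f(x^\star))/R$. *)

From HB Require Import structures.
From mathcomp Require Import all_boot all_order all_algebra.
From mathcomp Require Import all_classical all_reals all_analysis.
Set Implicit Arguments. Unset Strict Implicit. Unset Printing Implicit Defensive.
Import Order.TTheory GRing.Theory Num.Theory.
Import numFieldNormedType.Exports.
Local Open Scope classical_set_scope.
Local Open Scope ring_scope.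

Section Defs.
Variables (R : realType) (n : nat).
Local Notation vec := 'rV[R]_n.

Definition dotp (u w : vec) : R := \sum_(i < n) u 0 i * w 0 i.
Definition norm2 (u : vec) : R := Num.sqrt (dotp u u).

Definition diam (A : set vec) : R :=
  sup [set norm2 (x - y) | x in A & y in A].

Definition convhull (A : set vec) : set vec :=
  [set y | exists (k : nat) (p : 'I_k -> vec) (w : 'I_k -> R),
      (forall i, A (p i)) /\ (forall i, 0 <= w i) /\ \sum_(i < k) w i = 1
      /\ y = \sum_(i < k) w i *: p i].

Definition is_gradient (f : vec -> R) (grad : vec -> vec) : Prop :=
  forall x, differentiable f x /\ forall h, 'd f x h = dotp (grad x) h.

Definition convex_fun (f : vec -> R) : Prop :=
  forall x y (l : R), 0 <= l <= 1 ->
    f (l *: x + (1 - l) *: y) <= l * f x + (1 - l) * f y.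

Definition ell (f : vec -> R) (grad : vec -> vec) (x y : vec) : R :=
  if x == y then 0
  else 2 * `|f y - f x - dotp (grad x) (y - x)| / (norm2 (y - x)) ^+ 2.

Definition away_gmax (a : R) : \bar R :=
  if a == 1 then +oo%E else (a / (1 - a))%:E.

(* One full run of AC-FW with the away-step FW subroutine.
   xm1 = x_{-1}; xbar t = \bar x_{t+1}; Lt t = L_t; rr t = r_t;
   alpha t s = alpha_{s,t}; S_t = [set s | 0 < alpha t s]. *)
Definition AC_AFW_run (A : set vec) (f : vec -> R) (grad : vec -> vec)
  (rr : nat -> R) (xm1 : vec) (x v s d xbar : nat -> vec)
  (gmax : nat -> \bar R) (gamma Lt : nat -> R) (alpha : nat -> vec -> R) : Prop :=
  A xm1 /\
  (A (x 0%N) /\ (forall w, A w -> dotp (grad xm1) (x 0%N) <= dotp (grad xm1) w)) /\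
  Lt 0%N = ell f grad xm1 (x 0%N) /\
  alpha 0%N = (fun w => if w == x 0%N then 1 else 0) /\
  forall t : nat,
      (A (v t) /\ (forall w, A w -> dotp (grad (x t)) (v t) <= dotp (grad (x t)) w)) /\
          (0 < alpha t (s t) /\
            (forall w, 0 < alpha t w -> dotp (grad (x t)) w <= dotp (grad (x t)) (s t))) /\
          (if dotp (grad (x t)) (x t - v t) >= dotp (grad (x t)) (s t - x t)
           then d t = x t - v t /\ gmax t = 1%E
           else d t = s t - x t /\ gmax t = away_gmax (alpha t (s t))) /\
          ((gamma t)%:E = Order.min
              ((dotp (grad (x t)) (d t) / (Lt t * (norm2 (d t)) ^+ 2))%:E) (gmax t)) /\
          xbar t = x t - gamma t *: d t /\
          Lt t.+1 = Num.max (ell f grad (x t) (xbar t)) (rr t * Lt t) /\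
          x t.+1 = (if f (xbar t) < f (x t) then xbar t else x t) /\
          alpha t.+1 =
            (if f (xbar t) < f (x t) then
               (if dotp (grad (x t)) (x t - v t) >= dotp (grad (x t)) (s t - x t)
                then (fun w => (1 - gamma t) * alpha t w
                               + gamma t * (if w == v t then 1 else 0))
                else (fun w => (1 + gamma t) * alpha t w
                               - gamma t * (if w == s t then 1 else 0)))
             else alpha t).

Definition Gset (gmax : nat -> \bar R) (gamma : nat -> R) (t : nat) : Prop :=
  (1%E <= gmax t)%E \/ ((gamma t)%:E < gmax t)%E.

Definition Iset (eta : R) (Lt : nat -> R) (t : nat) : Prop :=
  Lt t.+1 <= eta * Lt t.

End Defs.

From HB Require Import structures.
From mathcomp Require Import all_boot all_order all_algebra.
From mathcomp Require Import all_classical all_reals all_analysis.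
From mathcomp Require Import ring lra zify.
Import Order.TTheory GRing.Theory Num.Theory.
Import numFieldNormedType.Exports.
Local Open Scope classical_set_scope.
Local Open Scope ring_scope.
Set Implicit Arguments. Unset Strict Implicit. Unset Printing Implicit Defensive.

(* The weights [alpha t] write [x t] as a convex combination of atoms of [A], and the update
   [x t - g *: d t] keeps them a convex combination for [0 <= g <= gmax t]: this gives (S)(i).
   (S)(iii) is the gradient inequality of a convex function combined with the choice of [v t].
   For the count, a step outside [G] is an away step with [gamma t = gmax t], which, if
   accepted, removes [s t] from the active set. Such drop steps shrink the active set, which
   only FW steps enlarge, so at most half of the steps are drop steps. A rejected step with
   [gamma t] at most the short step has [ell >= 2 Lt t > eta Lt t], so it lies outside [I_eta].
   Finally [Lt t <= L] by the descent lemma, while [Lt] gains a factor [eta] at every step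
   outside [I_eta] and loses at most the factor [r] overall, so there are at most
   [log_eta (L / (r Lt 0))] such steps. (S)(ii) follows because the lower bound grows like [t/2]. *)

Section EuclideanSpace.
Variables (R : realType) (n : nat).
Local Notation vec := 'rV[R]_n.
Implicit Types (u w z : vec) (a : R).

Lemma dotpC u w : dotp u w = dotp w u.
Proof. by apply: eq_bigr => i _; rewrite mulrC. Qed.

Lemma dotpDl u w z : dotp (u + w) z = dotp u z + dotp w z.
Proof. by rewrite /dotp -big_split; apply: eq_bigr => i _; rewrite mxE mulrDl. Qed.

Lemma dotpZl a u z : dotp (a *: u) z = a * dotp u z.
Proof. by rewrite /dotp mulr_sumr; apply: eq_bigr => i _; rewrite mxE mulrA. Qed.

Lemma dotpNl u z : dotp (- u) z = - dotp u z.
Proof. by rewrite -scaleN1r dotpZl mulN1r. Qed.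

Lemma dotpBl u w z : dotp (u - w) z = dotp u z - dotp w z.
Proof. by rewrite dotpDl dotpNl. Qed.

Lemma dotp0l z : dotp 0 z = 0.
Proof. by rewrite -(scale0r (0 : vec)) dotpZl mul0r. Qed.

Lemma dotpDr u w z : dotp z (u + w) = dotp z u + dotp z w.
Proof. by rewrite dotpC dotpDl !(dotpC z). Qed.

Lemma dotpZr a u z : dotp z (a *: u) = a * dotp z u.
Proof. by rewrite dotpC dotpZl dotpC. Qed.

Lemma dotpNr u z : dotp z (- u) = - dotp z u.
Proof. by rewrite dotpC dotpNl dotpC. Qed.

Lemma dotpBr u w z : dotp z (u - w) = dotp z u - dotp z w.
Proof. by rewrite dotpDr dotpNr. Qed.

Lemma dotp0r z : dotp z 0 = 0.
Proof. by rewrite dotpC dotp0l. Qed.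

Lemma dotp_sumr (I : Type) (r : seq I) (F : I -> vec) z :
  dotp z (\sum_(i <- r) F i) = \sum_(i <- r) dotp z (F i).
Proof. exact: (big_morph _ (fun u w => dotpDr u w z) (dotp0r z)). Qed.

Lemma dotpp_ge0 u : 0 <= dotp u u.
Proof. by apply: sumr_ge0 => i _; rewrite -expr2 sqr_ge0. Qed.

Lemma dotpp_eq0 u : (dotp u u == 0) = (u == 0).
Proof.
apply/idP/eqP => [|->]; last by rewrite dotp0l.
rewrite psumr_eq0 => [/allP u0|i _]; last by rewrite -expr2 sqr_ge0.
apply/rowP => i; rewrite !mxE; apply/eqP.
by rewrite -sqrf_eq0 expr2; exact: u0 (mem_index_enum i).
Qed.

Lemma norm2_ge0 u : 0 <= norm2 u.
Proof. exact: sqrtr_ge0. Qed.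

Lemma norm2_sqr u : norm2 u ^+ 2 = dotp u u.
Proof. by rewrite sqr_sqrtr // dotpp_ge0. Qed.

Lemma norm2_eq0 u : (norm2 u == 0) = (u == 0).
Proof. by rewrite sqrtr_eq0 le_eqVlt ltNge dotpp_ge0 orbF dotpp_eq0. Qed.

Lemma norm2_gt0 u : (0 < norm2 u) = (u != 0).
Proof. by rewrite lt_def norm2_ge0 andbT norm2_eq0. Qed.

Lemma norm2Z a u : norm2 (a *: u) = `|a| * norm2 u.
Proof.
by rewrite /norm2 dotpZl dotpZr mulrA -expr2 sqrtrM ?sqr_ge0 // sqrtr_sqr.
Qed.

Lemma norm2N u : norm2 (- u) = norm2 u.
Proof. by rewrite -scaleN1r norm2Z normrN normr1 mul1r. Qed.

Lemma norm2B u w : norm2 (u - w) = norm2 (w - u).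
Proof. by rewrite -norm2N opprB. Qed.

Lemma norm2_0 : norm2 (0 : vec) = 0.
Proof. by apply/eqP; rewrite norm2_eq0. Qed.

(* Cauchy-Schwarz, from [0 <= |b u - a w|^2 = 2 a b (a b - <u, w>)] with [a = |u|], [b = |w|]. *)
Lemma dotp_le_norm2 u w : dotp u w <= norm2 u * norm2 w.
Proof.
have [->|u0] := eqVneq u 0; first by rewrite dotp0l norm2_0 mul0r.
have [->|w0] := eqVneq w 0; first by rewrite dotp0r norm2_0 mulr0.
set a := norm2 u; set b := norm2 w.
have ab_gt0 : 0 < a * b by rewrite mulr_gt0 ?norm2_gt0.
have := dotpp_ge0 (b *: u - a *: w).
rewrite dotpBl !dotpBr !dotpZl !dotpZr -!norm2_sqr -/a -/b (dotpC w u) => H.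
rewrite -(ler_pM2l ab_gt0); nra.
Qed.

Lemma abs_dotp_le_norm2 u w : `|dotp u w| <= norm2 u * norm2 w.
Proof.
by rewrite ler_norml dotp_le_norm2 andbT lerNl -dotpNl -(norm2N u) dotp_le_norm2.
Qed.

Lemma norm2D u w : norm2 (u + w) <= norm2 u + norm2 w.
Proof.
rewrite -(ler_pXn2r (_ : 0 < 2)%N) ?nnegrE ?addr_ge0 ?norm2_ge0 //.
rewrite norm2_sqr dotpDl !dotpDr (dotpC w u) sqrrD !norm2_sqr.
have := dotp_le_norm2 u w; lra.
Qed.

Lemma norm2_sum (I : Type) (r : seq I) (F : I -> vec) :
  norm2 (\sum_(i <- r) F i) <= \sum_(i <- r) norm2 (F i).
Proof.
elim/big_rec2: _ => [|i y1 y2 _ IH]; first by rewrite norm2_0.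
exact: le_trans (norm2D _ _) (lerD (lexx _) IH).
Qed.

End EuclideanSpace.

Section RealIncrements.
Variable R : realType.

Lemma derive_le0_le (psi dpsi : R -> R) :
  (forall u : R, is_derive u (1 : R) psi (dpsi u)) ->
  (forall u, 0 < u < 1 -> dpsi u <= 0) -> psi 1 <= psi 0.
Proof.
move=> psi' dpsi_le0.
have psi_cont : {within `[0, 1], continuous psi}.
  by apply: derivable_within_continuous => u _; exact: ex_derive.
have [c c01 incr] := MVT ltr01 (fun u _ => psi' u) psi_cont.
by rewrite -subr_le0 incr subr0 mulr1 dpsi_le0 // -in_itv.
Qed.

Lemma abs_increment_le (phi dphi : R -> R) (c : R) :
  (forall u : R, is_derive u (1 : R) phi (dphi u)) ->
  (forall u, 0 < u < 1 -> `|dphi u| <= c * u) -> `|phi 1 - phi 0| <= c / 2.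
Proof.
move=> phi' dphi_le.
suff signed (sg : R) : `|sg| = 1 -> sg * (phi 1 - phi 0) <= c / 2.
  rewrite ler_norml lerNl -mulN1r signed ?normrN ?normr1 //=.
  by rewrite -[_ - _]mul1r signed ?normr1.
move=> sg1; pose psi := sg \*: phi - (c / 2) \*: (@idfun R * @idfun R).
have psi' (u : R) : is_derive u (1 : R) psi (sg * dphi u - c * u).
  have psi'E : is_derive u (1 : R) psi (sg *: dphi u - (c / 2) *: (u *: 1 + u *: 1)).
    by apply: is_deriveB; exact: is_deriveZ.
  apply: is_derive_eq psi'E _.
  by rewrite -[u%:A]/(u * 1) -[_ *: (_ + _)]/(_ * _) -[sg *: _]/(sg * _); field.
have psi_val u : psi u = sg * phi u - c / 2 * (u * u) by [].
suff : psi 1 <= psi 0 by rewrite !psi_val !mulr1 !mulr0 subr0; lra.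
apply: derive_le0_le psi' _ => u u01; have := dphi_le u u01.
have : sg * dphi u <= `|dphi u| by rewrite -[X in _ <= X]mul1r -sg1 -normrM ler_norm.
lra.
Qed.

End RealIncrements.

Section LipschitzGradient.
Variables (R : realType) (n : nat).
Local Notation vec := 'rV[R]_n.
Variables (f : vec -> R) (grad : vec -> vec).
Hypothesis f_grad : is_gradient f grad.

Lemma is_derive_line (x h : vec) (t : R) :
  is_derive t (1 : R) (fun u : R => f (x + u *: h)) (dotp (grad (x + t *: h)) h).
Proof.
have [f_diff f_d] := f_grad (x + t *: h).
have quotE : (fun k : R => k^-1 *: (((fun u => f (x + u *: h)) \o shift t) (k *: 1)
                                  - f (x + t *: h)))
   = (fun k : R => k^-1 *: ((f \o shift (x + t *: h)) (k *: h) - f (x + t *: h))).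
  apply/funext => k /=; congr (_ *: (f _ - _)).
  by rewrite /shift scalerDl -[k%:A]/(k * 1) mulr1 addrCA addrA.
have f_der : derivable f (x + t *: h) h by exact: diff_derivable.
split; first by rewrite /derivable quotE.
by rewrite /derive quotE -/(derive f _ h) deriveE // f_d.
Qed.

Lemma lipschitz_gradient_taylor (L : R) :
  (forall y z, norm2 (grad y - grad z) <= L * norm2 (y - z)) ->
  forall x y, `|f y - f x - dotp (grad x) (y - x)| <= L / 2 * norm2 (y - x) ^+ 2.
Proof.
move=> grad_lip x y; set h := y - x; set k := dotp (grad x) h.
pose phi := (fun u : R => f (x + u *: h)) - k \*: @idfun R.
have phi' (u : R) : is_derive u (1 : R) phi (dotp (grad (x + u *: h)) h - k *: 1).
  by apply: is_deriveB; exact: is_derive_line.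
have phi_val u : phi u = f (x + u *: h) - k * u by [].
suff : `|phi 1 - phi 0| <= L * norm2 h ^+ 2 / 2.
  by rewrite !phi_val mulr1 mulr0 subr0 scale0r addr0 scale1r /h subrKC mulrAC addrAC.
apply: (abs_increment_le phi') => u /andP[u_gt0 _].
rewrite -[k%:A]/(k * 1) mulr1 /k -dotpBl.
apply: le_trans (abs_dotp_le_norm2 _ _) _.
apply: le_trans (ler_wpM2r (norm2_ge0 _) (grad_lip _ _)) _.
by rewrite addrC addKr norm2Z gtr0_norm // expr2 !mulrA -!(mulrAC _ u).
Qed.

Lemma ell_le_lipschitz (L : R) :
  (forall y z, norm2 (grad y - grad z) <= L * norm2 (y - z)) ->
  forall y z, y != z -> ell f grad y z <= L.
Proof.
move=> grad_lip y z yz; rewrite /ell (negbTE yz).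
have zy_gt0 : 0 < norm2 (z - y) ^+ 2 by rewrite exprn_gt0 // norm2_gt0 subr_eq0 eq_sym.
rewrite ler_pdivrMr //; have := lipschitz_gradient_taylor grad_lip y z; lra.
Qed.

(* The chord slope [(f (x + u h) - f x) / u] is bounded by [f y - f x] on [(0, 1]], and
   tends to the directional derivative as [u] decreases to 0. *)
Lemma convex_gradient_le :
  convex_fun f -> forall x y, f x + dotp (grad x) (y - x) <= f y.
Proof.
move=> f_cvx x y; set h := y - x.
have [slope_cvg slope_lim] := is_derive_line x h 0.
rewrite scale0r addr0 in slope_lim.
rewrite addrC -lerBrDr -slope_lim.
apply: cvgr_to_le (cvg_dnbhs_at_right slope_cvg) _.
near=> u; have u_gt0 : 0 < u by near: u; exact: nbhs_right_gt.
have u_le1 : u <= 1 by near: u; exact: nbhs_right_le.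
rewrite /= /shift addr0 scale0r addr0 -[u *: 1]/(u * 1) mulr1.
have -> : x + u *: h = u *: y + (1 - u) *: x.
  by rewrite /h scalerBr scalerBl scale1r addrCA addrA.
have := f_cvx y x u; rewrite u_le1 ltW //= => /(_ isT) cvx.
rewrite -[_ *: _]/(_ * _) ler_pdivrMl //; lra.
Unshelve. all: by end_near.
Qed.

End LipschitzGradient.

Section ConvexHull.
Variables (R : realType) (n : nat).
Local Notation vec := 'rV[R]_n.
Implicit Types (A : set vec) (r : seq vec).

Lemma norm2_le_mx_norm (u : vec) : norm2 u <= Num.sqrt (n%:R * `|u| ^+ 2).
Proof.
apply: ler_wsqrtr; rewrite /dotp mulr_natl -[n in _ *+ n]card_ord -sumr_const.
apply: ler_sum => i _; rewrite -expr2 -real_normK ?num_real // lerXn2r ?nnegrE //.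
rewrite (_ : `|u| = mx_norm u) // mx_normrE.
exact: (le_bigmax _ (fun ij : 'I_1 * 'I_n => `|u ij.1 ij.2|) (0, i)).
Qed.

Lemma diam_has_ubound A : compact A -> has_ubound [set norm2 (x - y) | x in A & y in A].
Proof.
move=> /compact_bounded[M [_ A_bnd]].
have {}A_bnd z : A z -> `|z| <= M + 1 by apply: A_bnd; rewrite ltrDl.
exists (Num.sqrt (n%:R * (2 * (M + 1)) ^+ 2)) => _ [p Ap [q Aq <-]].
apply: le_trans (norm2_le_mx_norm _) _; apply: ler_wsqrtr.
rewrite ler_wpM2l // lerXn2r ?nnegrE ?mulr_ge0 //.
- exact: le_trans (normr_ge0 p) (A_bnd _ Ap).
- by apply: le_trans (ler_normB p q) _; rewrite mulr2n mulrDl mul1r lerD ?A_bnd.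
Qed.

Lemma norm2_le_diam A p q : compact A -> A p -> A q -> norm2 (p - q) <= diam A.
Proof.
move=> A_cpt Ap Aq; apply: (ub_le_sup (diam_has_ubound A_cpt)).
by exists p => //; exists q.
Qed.

Lemma convhull_comb A r (b : vec -> R) :
  (forall w, w \in r -> A w) -> (forall w, w \in r -> 0 <= b w) ->
  \sum_(w <- r) b w = 1 -> convhull A (\sum_(w <- r) b w *: w).
Proof.
move=> rA b_ge0 b_sum1.
exists (size r), (fun i => nth 0 r i), (fun i => b (nth 0 r i)).
rewrite (big_nth 0) big_mkord in b_sum1.
split; first by move=> i; apply: rA; rewrite mem_nth.
split; first by move=> i; apply: b_ge0; rewrite mem_nth.
by rewrite (big_nth 0) big_mkord.
Qed.

Lemma convhull_dotp_ge A (g : vec) (c : R) y :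
  (forall w, A w -> c <= dotp g w) -> convhull A y -> c <= dotp g y.
Proof.
move=> A_ge [k [p [w [Ap [w_ge0 [w_sum1 ->]]]]]].
rewrite dotp_sumr -[c]mul1r -w_sum1 mulr_suml.
by apply: ler_sum => i _; rewrite dotpZr ler_wpM2l ?A_ge.
Qed.

Lemma norm2_combB_le_diam A r (b : vec -> R) p :
  compact A -> A p -> (forall w, w \in r -> A w) -> (forall w, w \in r -> 0 <= b w) ->
  \sum_(w <- r) b w = 1 -> norm2 (\sum_(w <- r) b w *: w - p) <= diam A.
Proof.
move=> A_cpt Ap rA b_ge0 b_sum1.
have -> : \sum_(w <- r) b w *: w - p = \sum_(w <- r) b w *: (w - p).
  rewrite -[p in _ - p]scale1r -b_sum1 scaler_suml -sumrB.
  by apply: eq_bigr => w _; rewrite scalerBr.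
apply: le_trans (norm2_sum _ _) _.
rewrite -[diam A]mul1r -b_sum1 mulr_suml big_seq [X in _ <= X]big_seq.
apply: ler_sum => w wr; rewrite norm2Z ger0_norm ?b_ge0 //.
by apply: ler_wpM2l; [exact: b_ge0 | exact: norm2_le_diam A_cpt (rA _ wr) Ap].
Qed.

End ConvexHull.

Section Counting.

(* [big_ord_recr], stated so that the remaining sum is syntactically the [\sum_(k < T)] of the
   statements below, as [lia] needs. *)
Lemma sum_ord_recr (F : nat -> nat) T : (\sum_(k < T.+1) F k = \sum_(k < T) F k + F T)%N.
Proof. exact: big_ord_recr. Qed.

Lemma count_le_predU1 (T : eqType) (p q : pred T) (u : T) (r : seq T) :
  uniq r -> (forall w, p w -> w = u \/ q w) -> (count p r <= (count q r).+1)%N.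
Proof.
move=> r_uniq pq; apply: (@leq_trans (count (predU (pred1 u) q) r)).
  by apply: sub_count => w /pq[->|qw] /=; rewrite ?eqxx ?qw ?orbT.
have := count_predUI (pred1 u) q r; have := count_uniq_mem u r_uniq.
have := leq_b1 (u \in r); lia.
Qed.

Lemma count_lt_predD1 (T : eqType) (p q : pred T) (u : T) (r : seq T) :
  uniq r -> u \in r -> q u -> (forall w, p w -> q w /\ w != u) ->
  (count p r < count q r)%N.
Proof.
move=> r_uniq ur qu pq; rewrite !(permP (perm_to_rem ur)) /= qu.
have -> : p u = false by apply/negP => /pq[_]; rewrite eqxx.
by rewrite add0n add1n ltnS; apply: sub_count => w /pq[].
Qed.

Lemma twice_sum_down_le (N : nat -> nat) (up down : nat -> bool) :
  (N 0 <= 1)%N -> (forall t, 0 < N t)%N -> (forall t, ~~ (up t && down t)) ->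
  (forall t, N t.+1 + down t <= N t + up t)%N ->
  forall T, (2 * \sum_(k < T) down k <= T)%N.
Proof.
move=> N0 N_gt0 up_down N_step T.
have balance : (N T + \sum_(k < T) down k <= 1 + \sum_(k < T) up k)%N.
  elim: T => [|T IH]; first by rewrite !big_ord0 !addn0.
  rewrite (sum_ord_recr (fun k => nat_of_bool (down k))).
  rewrite (sum_ord_recr (fun k => nat_of_bool (up k))).
  by have := N_step T; lia.
have up_down_le : (\sum_(k < T) down k + \sum_(k < T) up k <= T)%N.
  rewrite -big_split /= -[X in (_ <= X)%N]card_ord -sum1_card.
  by apply: leq_sum => k _; have := up_down k; case: (up k); case: (down k).
have := N_gt0 T; lia.
Qed.

Lemma sum_asbool_le_minn (P : nat -> Prop) (N : nat) :
  (forall k, (N <= k)%N -> ~ P k) ->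
  forall T, (\sum_(k < T) (`[< P k >] : nat) <= minn T N)%N.
Proof.
move=> notP; elim=> [|T IH]; first by rewrite big_ord0.
rewrite (sum_ord_recr (fun k => nat_of_bool `[< P k >])); have [TN|NT] := ltnP T N.
  by have := leq_b1 `[< P T >]; lia.
by rewrite asboolF ?addn0 ?(leq_trans IH) //; [lia | exact: notP].
Qed.

End Counting.

Section RealSequences.
Variable R : realType.

Lemma infinitely_often_of_density (P : nat -> Prop) (K : R) :
  (forall t, (t.+1)%:R / 2 - K <= (\sum_(k < t.+1) (`[< P k >] : nat))%:R) ->
  forall N, exists2 t, (N <= t)%N & P t.
Proof.
move=> density N; apply: contrapT => noP.
have notP k : (N <= k)%N -> ~ P k by move=> Nk Pk; apply: noP; exists k.
pose m := `|Num.ceil K|%N; pose t := (2 * (N + m)).+1.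
have K_le_m : K <= m%:R by rewrite natr_absz intr_norm (le_trans (ceil_ge K)) ?ler_norm.
have sum_le : ((\sum_(k < t.+1) (`[< P k >] : nat))%:R <= N%:R :> R).
  by rewrite ler_nat (leq_trans (sum_asbool_le_minn notP _)) ?geq_minr.
have := density t; have -> : (t.+1%:R / 2 : R) = N%:R + m%:R + 1.
  by rewrite /t -addn2 natrD natrM !natrD; field.
lra.
Qed.

Lemma prod_ge_lim (rr : nat -> R) (r : R) :
  (forall t, 0 <= rr t <= 1) -> (fun t => \prod_(k < t) rr k) @ \oo --> r ->
  forall T, r <= \prod_(k < T) rr k.
Proof.
move=> rr01 prod_cvg T.
have prod_nincr : nonincreasing_seq (fun t => \prod_(k < t) rr k).
  apply/nonincreasing_seqP => k; rewrite big_ord_recr /=.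
  have /andP[rk0 rk1] := rr01 k.
  by rewrite ler_piMr // prodr_ge0 // => i _; have /andP[] := rr01 i.
by rewrite -(cvg_lim _ prod_cvg) //; exact: nonincreasing_cvgn_ge (cvgP _ prod_cvg) T.
Qed.

Lemma Iset_growth (a rho : nat -> R) (eta : R) :
  1 <= eta -> (forall t, 0 <= rho t <= 1) -> (forall t, 0 <= a t) ->
  (forall t, rho t * a t <= a t.+1) ->
  forall T, eta ^+ (\sum_(k < T) (~~ `[< Iset eta a k >] : nat)) * \prod_(k < T) rho k * a 0%N
            <= a T.
Proof.
move=> eta_ge1 rho01 a_ge0 a_step.
have eta_ge0 : 0 <= eta := le_trans ler01 eta_ge1.
elim=> [|T IH]; first by rewrite !big_ord0 expr0 !mul1r.
have /andP[rho_ge0 rho_le1] := rho01 T.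
set jump := (~~ `[< Iset eta a T >] : nat).
have a_stepT : eta ^+ jump * rho T * a T <= a T.+1.
  rewrite /jump; have [_|notI] := asboolP (Iset eta a T); first by rewrite expr0 mul1r.
  have jumpT : eta * a T < a T.+1 by rewrite ltNge; apply/negP.
  by apply: le_trans (ltW jumpT); rewrite expr1 -mulrA ler_wpM2l // ler_piMl.
apply: le_trans a_stepT.
rewrite (sum_ord_recr (fun k => nat_of_bool (~~ `[< Iset eta a k >]))) -/jump big_ord_recr /=.
set S := \sum_(k < T) _ in IH *; set P := \prod_(k < T) _ in IH *.
have -> : eta ^+ (S + jump) * (P * rho T) * a 0%N = eta ^+ jump * rho T * (eta ^+ S * P * a 0%N).
  by rewrite exprD; ring.
by rewrite ler_wpM2l // mulr_ge0 // exprn_ge0.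
Qed.

Lemma natr_le_floor_log (eta c : R) (m : nat) :
  1 < eta -> eta ^+ m <= c -> (m%:R : R) <= (Num.floor (ln c / ln eta))%:~R.
Proof.
move=> eta_gt1 pow_le.
have eta_gt0 : 0 < eta by exact: lt_trans ltr01 eta_gt1.
have pow_gt0 : 0 < eta ^+ m by rewrite exprn_gt0.
have c_gt0 : 0 < c by exact: lt_le_trans pow_le.
suff m_le : (m%:Z <= Num.floor (ln c / ln eta))%R by rewrite -(ler_int R) -pmulrn in m_le.
by rewrite floor_ge_int -pmulrn ler_pdivlMr ?ln_gt0 // mulr_natl -lnXn // ler_ln ?posrE.
Qed.

End RealSequences.

Section IndicatorSums.
Variables (R : realType) (T : eqType).

Lemma sum_if_eq (V : nmodType) (r : seq T) (u : T) (F : T -> V) :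
  uniq r -> u \in r -> \sum_(w <- r) (if w == u then F w else 0) = F u.
Proof. by move=> r_uniq ur; rewrite -big_mkcond -big_filter filter_pred1_uniq // big_seq1. Qed.

Lemma sum_affine_update (V : lmodType R) (r : seq T) (u : T) (a : T -> R) (F : T -> V) c1 c2 :
  uniq r -> u \in r ->
  \sum_(w <- r) (c1 * a w + c2 * (if w == u then 1 else 0)) *: F w
    = c1 *: \sum_(w <- r) a w *: F w + c2 *: F u.
Proof.
move=> r_uniq ur; rewrite scaler_sumr -(sum_if_eq (fun w => c2 *: F w) r_uniq ur) -big_split.
by apply: eq_bigr => w _; rewrite scalerDl scalerA; case: eqP; rewrite ?mulr1 ?mulr0 ?scale0r.
Qed.

Lemma sum_affine_update_scalar (r : seq T) (u : T) (a : T -> R) c1 c2 :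
  uniq r -> u \in r ->
  \sum_(w <- r) (c1 * a w + c2 * (if w == u then 1 else 0)) = c1 * \sum_(w <- r) a w + c2.
Proof.
move=> r_uniq ur; rewrite mulr_sumr -[in RHS](sum_if_eq (fun _ => c2) r_uniq ur) -big_split.
by apply: eq_bigr => w _; case: eqP; rewrite ?mulr1 ?mulr0.
Qed.

End IndicatorSums.

Section AwayStepFrankWolfe.
Variables (R : realType) (n : nat).
Local Notation vec := 'rV[R]_n.
Variables (A : set vec) (f : vec -> R) (grad : vec -> vec) (rr : nat -> R)
  (xm1 : vec) (x v s d xbar : nat -> vec) (gmax : nat -> \bar R)
  (gamma Lt : nat -> R) (alpha : nat -> vec -> R).
Hypothesis run : AC_AFW_run A f grad rr xm1 x v s d xbar gmax gamma Lt alpha.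
Hypothesis rr01 : forall t, 0 < rr t <= 1.
Hypothesis Lt0_gt0 : 0 < Lt 0%N.
Hypothesis f_grad : is_gradient f grad.
Variable L : R.
Hypothesis grad_lip : forall y z, norm2 (grad y - grad z) <= L * norm2 (y - z).

Definition fw_step t : bool :=
  dotp (grad (x t)) (s t - x t) <= dotp (grad (x t)) (x t - v t).

Definition accepted t : bool := f (xbar t) < f (x t).

Definition next_weights t (g : R) (w : vec) : R :=
  if fw_step t then (1 - g) * alpha t w + g * (if w == v t then 1 else 0)
  else (1 + g) * alpha t w - g * (if w == s t then 1 else 0).

Lemma x0_in_A : A (x 0%N).
Proof. by case: run => _ [[]]. Qed.

Lemma Lt0E : Lt 0%N = ell f grad xm1 (x 0%N).
Proof. by case: run => _ [_ []]. Qed.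

Lemma alpha0E : alpha 0%N = (fun w => if w == x 0%N then 1 else 0).
Proof. by case: run => _ [_ [_ []]]. Qed.

Lemma v_argmin t : A (v t) /\ forall w, A w -> dotp (grad (x t)) (v t) <= dotp (grad (x t)) w.
Proof. by case: run => _ [_ [_ [_ /(_ t) []]]]. Qed.

Lemma s_argmax t : 0 < alpha t (s t) /\
  forall w, 0 < alpha t w -> dotp (grad (x t)) w <= dotp (grad (x t)) (s t).
Proof. by case: run => _ [_ [_ [_ /(_ t) [_ []]]]]. Qed.

Lemma dE t : if fw_step t then d t = x t - v t /\ gmax t = 1%E
             else d t = s t - x t /\ gmax t = away_gmax (alpha t (s t)).
Proof. by case: run => _ [_ [_ [_ /(_ t) [_ [_ []]]]]]. Qed.

Lemma gammaE t : (gamma t)%:E =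
  Order.min ((dotp (grad (x t)) (d t) / (Lt t * norm2 (d t) ^+ 2))%:E) (gmax t).
Proof. by case: run => _ [_ [_ [_ /(_ t) [_ [_ [_ []]]]]]]. Qed.

Lemma xbarE t : xbar t = x t - gamma t *: d t.
Proof. by case: run => _ [_ [_ [_ /(_ t) [_ [_ [_ [_ []]]]]]]]. Qed.

Lemma LtS t : Lt t.+1 = Num.max (ell f grad (x t) (xbar t)) (rr t * Lt t).
Proof. by case: run => _ [_ [_ [_ /(_ t) [_ [_ [_ [_ [_ []]]]]]]]]. Qed.

Lemma xS t : x t.+1 = if accepted t then xbar t else x t.
Proof. by case: run => _ [_ [_ [_ /(_ t) [_ [_ [_ [_ [_ [_ []]]]]]]]]]. Qed.

Lemma alphaS t : alpha t.+1 = if accepted t then next_weights t (gamma t) else alpha t.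
Proof.
case: run => _ [_ [_ [_ /(_ t) [_ [_ [_ [_ [_ [_ [_ ->]]]]]]]]]].
rewrite /accepted /next_weights /fw_step.
by case: ifP => // _; apply/funext => w; case: ifP.
Qed.

Lemma Lt_gt0 t : 0 < Lt t.
Proof.
elim: t => // t IH; rewrite LtS lt_max; apply/orP; right.
by rewrite mulr_gt0 //; case/andP: (rr01 t).
Qed.

(* A duplicate-free list containing the support of [alpha t] (see [weight_out] below). *)
Fixpoint atoms t : seq vec :=
  if t is t'.+1 then (if v t' \in atoms t' then atoms t' else v t' :: atoms t')
  else [:: x 0%N].

Lemma atoms_uniq t : uniq (atoms t).
Proof. by elim: t => //= t IH; case: ifP => //= ->. Qed.

Lemma atoms_subS t w : w \in atoms t -> w \in atoms t.+1.
Proof. by rewrite /=; case: ifP => // _ wt; rewrite in_cons wt orbT. Qed.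

Lemma v_in_atomsS t : v t \in atoms t.+1.
Proof. by rewrite /=; case: ifP => // _; rewrite mem_head. Qed.

Lemma atomsSP t w : w \in atoms t.+1 -> w = v t \/ w \in atoms t.
Proof. by rewrite /=; case: ifP => _; [right | rewrite in_cons => /predU1P]. Qed.

Lemma big_atomsS (V : nmodType) t (F : vec -> V) :
  (v t \notin atoms t -> F (v t) = 0) ->
  \sum_(w <- atoms t.+1) F w = \sum_(w <- atoms t) F w.
Proof. by rewrite /=; case: ifP => // _ /(_ isT) F0; rewrite big_cons F0 add0r. Qed.

Lemma count_atomsS t (p : pred vec) :
  (v t \notin atoms t -> ~~ p (v t)) -> count p (atoms t.+1) = count p (atoms t).
Proof. by rewrite /=; case: ifP => // _ /(_ isT) /negbTE /= ->. Qed.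

Record weights_inv t : Prop := WeightsInv {
  atoms_in_A : forall w, w \in atoms t -> A w;
  weight_out : forall w, w \notin atoms t -> alpha t w = 0;
  weight_ge0 : forall w, 0 <= alpha t w;
  weight_sum1 : \sum_(w <- atoms t) alpha t w = 1;
  x_comb : x t = \sum_(w <- atoms t) alpha t w *: w }.

Lemma weights_inv0 : weights_inv 0.
Proof.
split=> [w|w|w||]; rewrite /= ?alpha0E.
- by rewrite inE => /eqP ->; exact: x0_in_A.
- by rewrite inE => /negbTE ->.
- by case: ifP.
- by rewrite big_seq1 eqxx.
- by rewrite big_seq1 eqxx scale1r.
Qed.

Section OneStep.
Variable t : nat.
Hypothesis inv_t : weights_inv t.

Lemma s_in_atoms : s t \in atoms t.
Proof.
apply: contraT => /(weight_out inv_t) s0.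
by have := (s_argmax t).1; rewrite s0 ltxx.
Qed.

Lemma weight_le1 w : alpha t w <= 1.
Proof.
have [wt|/(weight_out inv_t) -> //] := boolP (w \in atoms t).
rewrite -(weight_sum1 inv_t) (big_rem w) //= lerDl.
by apply: sumr_ge0 => u _; exact: weight_ge0.
Qed.

Lemma x_in_convhull : convhull A (x t).
Proof.
rewrite (x_comb inv_t); apply: convhull_comb; first exact: atoms_in_A.
  by move=> w _; exact: weight_ge0.
exact: weight_sum1.
Qed.

Lemma dotp_grad_d_ge0 : 0 <= dotp (grad (x t)) (d t).
Proof.
have v_le_x : dotp (grad (x t)) (v t) <= dotp (grad (x t)) (x t).
  exact: convhull_dotp_ge (v_argmin t).2 x_in_convhull.
have := dE t; rewrite /fw_step; case: ifP => [_ [-> _]|/negbT away [-> _]].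
  by rewrite dotpBr subr_ge0.
rewrite -ltNge in away; apply: le_trans (ltW away).
by rewrite dotpBr subr_ge0.
Qed.

Lemma gmax_gt0 : (0 < gmax t)%E.
Proof.
have := dE t; case: ifP => _ [_ ->] //; rewrite /away_gmax.
case: eqVneq => // as_neq1.
have as_lt1 : alpha t (s t) < 1 by rewrite lt_neqAle as_neq1 weight_le1.
by rewrite lte_fin divr_gt0 ?subr_gt0 ?(s_argmax t).1.
Qed.

Lemma gamma_ge0 : 0 <= gamma t.
Proof.
rewrite -lee_fin gammaE le_min lee_fin (ltW gmax_gt0) andbT.
by rewrite divr_ge0 ?dotp_grad_d_ge0 // mulr_ge0 ?sqr_ge0 // ltW // Lt_gt0.
Qed.

Lemma gamma_le_gmax : ((gamma t)%:E <= gmax t)%E.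
Proof. by rewrite gammaE ge_min lexx orbT. Qed.

Lemma gamma_le_short : gamma t <= dotp (grad (x t)) (d t) / (Lt t * norm2 (d t) ^+ 2).
Proof. by rewrite -lee_fin gammaE ge_min lexx. Qed.

Lemma next_weights_sum1 g : \sum_(w <- atoms t.+1) next_weights t g w = 1.
Proof.
have sum1 : \sum_(w <- atoms t.+1) alpha t w = 1.
  by rewrite big_atomsS ?(weight_sum1 inv_t) // => /(weight_out inv_t).
rewrite /next_weights; case: (fw_step t).
  by rewrite (sum_affine_update_scalar (alpha t)) ?atoms_uniq ?v_in_atomsS // sum1 mulr1 subrK.
under eq_bigr do rewrite -mulNr.
by rewrite (sum_affine_update_scalar (alpha t)) ?atoms_uniq ?atoms_subS ?s_in_atoms // sum1 mulr1 addrK.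
Qed.

Lemma next_weights_comb g :
  \sum_(w <- atoms t.+1) next_weights t g w *: w = x t - g *: d t.
Proof.
have comb : \sum_(w <- atoms t.+1) alpha t w *: w = x t.
  by rewrite (x_comb inv_t) big_atomsS // => /(weight_out inv_t) ->; rewrite scale0r.
have := dE t; rewrite /next_weights; case: (fw_step t) => -[-> _].
  rewrite (sum_affine_update (alpha t) id) ?atoms_uniq ?v_in_atomsS // comb.
  by rewrite scalerBr scalerBl scale1r opprB addrA addrAC.
under eq_bigr do rewrite -mulNr.
rewrite (sum_affine_update (alpha t) id) ?atoms_uniq ?atoms_subS ?s_in_atoms // comb.
by rewrite scalerBr scalerDl scale1r scaleNr opprB addrA.
Qed.

Lemma next_weights_out g w : w \notin atoms t.+1 -> next_weights t g w = 0.
Proof.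
move=> wt; have wt' : w \notin atoms t by apply: contra wt; exact: atoms_subS.
have w_v : (w == v t) = false by apply: contraNF wt => /eqP ->; exact: v_in_atomsS.
have w_s : (w == s t) = false.
  by apply: contraNF wt => /eqP ->; exact: atoms_subS s_in_atoms.
by rewrite /next_weights (weight_out inv_t wt') w_v w_s !mulr0 subr0 addr0; case: ifP.
Qed.

Lemma next_weights_ge0 g : 0 <= g -> (g%:E <= gmax t)%E -> forall w, 0 <= next_weights t g w.
Proof.
move=> g_ge0 g_le w; have a_ge0 := weight_ge0 inv_t.
have := dE t; rewrite /next_weights; case: (fw_step t) => -[_ gmaxE].
  move: g_le; rewrite gmaxE lee_fin => g_le1.
  by rewrite addr_ge0 ?mulr_ge0 ?subr_ge0 //; case: ifP.
have [->|_] := eqVneq w (s t); last by rewrite mulr0 subr0 mulr_ge0 ?addr_ge0.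
move: g_le; rewrite gmaxE /away_gmax mulr1 subr_ge0.
have [->|as_neq1] := eqVneq (alpha t (s t)) 1; first by rewrite mulr1 lerDr.
have as_lt1 : alpha t (s t) < 1 by rewrite lt_neqAle as_neq1 weight_le1.
by rewrite lee_fin ler_pdivlMr ?subr_gt0 // => g_le; nra.
Qed.

End OneStep.

Lemma weights_invS t : weights_inv t -> weights_inv t.+1.
Proof.
move=> inv_t; have [inA out ge0 sum1 comb] := inv_t.
split.
- by move=> w /atomsSP[->|]; [exact: (v_argmin t).1 | exact: inA].
- move=> w wt; rewrite alphaS; case: (accepted t); first by rewrite next_weights_out.
  by apply: out; apply: contra wt; exact: atoms_subS.
- move=> w; rewrite alphaS; case: (accepted t) => //=.
  exact: (next_weights_ge0 inv_t (gamma_ge0 inv_t) (gamma_le_gmax t)).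
- rewrite alphaS; case: (accepted t); first by rewrite (next_weights_sum1 inv_t).
  by rewrite big_atomsS // => /out.
- rewrite alphaS xS xbarE; case: (accepted t); first by rewrite (next_weights_comb inv_t).
  by rewrite comb big_atomsS // => /out ->; rewrite scale0r.
Qed.

Lemma weights_invariant t : weights_inv t.
Proof. by elim: t => [|t]; [exact: weights_inv0 | exact: weights_invS]. Qed.

Lemma norm2_d_le_diam t : compact A -> norm2 (d t) <= diam A.
Proof.
move=> A_cpt; have [inA _ ge0 sum1 comb] := weights_invariant t.
have := dE t; case: (fw_step t) => -[-> _].
  by rewrite comb; apply: norm2_combB_le_diam => //; exact: (v_argmin t).1.
rewrite norm2B comb; apply: norm2_combB_le_diam => //.
exact/inA/s_in_atoms/weights_invariant.
Qed.

Lemma step_in_convhull t g : 0 <= g -> (g%:E <= gmax t)%E -> convhull A (x t - g *: d t).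
Proof.
move=> g_ge0 g_le; have inv_t := weights_invariant t.
rewrite -(next_weights_comb inv_t); apply: convhull_comb.
- exact: atoms_in_A (weights_invariant t.+1).
- by move=> w _; exact: (next_weights_ge0 inv_t g_ge0 g_le).
- exact: next_weights_sum1 inv_t g.
Qed.

Lemma gap_le_dotp_grad_d t xs : convex_fun f -> convhull A xs ->
  f (x t) - f xs <= dotp (grad (x t)) (d t).
Proof.
move=> f_cvx xs_hull.
have grad_ineq := convex_gradient_le f_grad f_cvx (x t) xs.
have v_le_xs : dotp (grad (x t)) (v t) <= dotp (grad (x t)) xs.
  exact: convhull_dotp_ge (v_argmin t).2 xs_hull.
have fw_gap : f (x t) - f xs <= dotp (grad (x t)) (x t - v t).
  by rewrite dotpBr; rewrite dotpBr in grad_ineq; lra.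
have := dE t; rewrite /fw_step; case: ifP => [_ [-> _] // | /negbT away [-> _]].
by rewrite -ltNge in away; exact: le_trans fw_gap (ltW away).
Qed.

Lemma notG_away_drop t : ~ Gset gmax gamma t ->
  [/\ fw_step t = false, alpha t (s t) < 1 & gamma t = alpha t (s t) / (1 - alpha t (s t))].
Proof.
move=> notG; have inv_t := weights_invariant t.
have gmaxE : gmax t = (gamma t)%:E.
  have := gamma_le_gmax t; rewrite le_eqVlt => /orP[/eqP <- // | lt].
  by case: notG; right.
have := dE t; case: ifP => fw [_ gmaxD]; first by case: notG; left; rewrite gmaxD.
move: gmaxD; rewrite /away_gmax; case: eqVneq => [_ gmaxD | as_neq1 gmaxD].
  by case: notG; left; rewrite gmaxD leey.
split=> //; first by rewrite lt_neqAle as_neq1 weight_le1.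
by move: gmaxE; rewrite gmaxD => -[].
Qed.

Lemma next_weights_gt0_fw t w : fw_step t ->
  0 < next_weights t (gamma t) w -> w = v t \/ 0 < alpha t w.
Proof.
move=> fw; have inv_t := weights_invariant t.
have gamma_le1 : gamma t <= 1.
  by have := gamma_le_gmax t; have := dE t; rewrite fw => -[_ ->]; rewrite lee_fin.
rewrite /next_weights fw; have [->|_] := eqVneq w (v t); first by left.
rewrite mulr0 addr0 => pos; right; apply: contraTT pos; rewrite -!leNgt.
by apply: mulr_ge0_le0; rewrite subr_ge0.
Qed.

Lemma next_weights_gt0_away t w : ~~ fw_step t ->
  0 < next_weights t (gamma t) w -> 0 < alpha t w.
Proof.
move=> away pos; have inv_t := weights_invariant t; have g_ge0 := gamma_ge0 inv_t.
rewrite -(pmulr_rgt0 _ (_ : 0 < 1 + gamma t)) ?ltr_wpDr //.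
apply: lt_le_trans pos _; rewrite /next_weights (negbTE away) gerBl.
by rewrite mulr_ge0 //; case: ifP.
Qed.

Lemma next_weights_drop t : ~ Gset gmax gamma t -> next_weights t (gamma t) (s t) = 0.
Proof.
move=> /notG_away_drop[fw as_lt1 ->]; rewrite /next_weights fw eqxx mulr1.
by field; rewrite subr_eq0 gt_eqF.
Qed.

Lemma rejected_ell_ge t : 0 < gamma t -> ~~ accepted t ->
  2 * Lt t <= ell f grad (x t) (xbar t).
Proof.
move=> gamma_gt0 rej; have inv_t := weights_invariant t.
have d_neq0 : d t != 0.
  by apply: contraTneq (gamma_le_short t) => ->; rewrite dotp0r mul0r -ltNge.
set gd := dotp (grad (x t)) (d t).
have short := gamma_le_short t; rewrite -/gd in short.
have Lt_pos := Lt_gt0 t.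
have d_gt0 : 0 < norm2 (d t) by rewrite norm2_gt0.
have xbar_neq : x t != xbar t.
  by rewrite xbarE -subr_eq0 opprB addrC subrK scaler_eq0 (gt_eqF gamma_gt0) (negbTE d_neq0).
have decrease : Lt t * (gamma t * norm2 (d t)) ^+ 2 <= f (xbar t) - f (x t) + gamma t * gd.
  have : gamma t * (gamma t * (Lt t * norm2 (d t) ^+ 2)) <= gamma t * gd.
    by rewrite ler_pM2l // -ler_pdivlMr // mulr_gt0 // exprn_gt0.
  have : f (x t) <= f (xbar t) by rewrite leNgt.
  rewrite exprMn; nra.
have step : xbar t - x t = - (gamma t *: d t) by rewrite xbarE addrAC subrr add0r.
rewrite /ell (negbTE xbar_neq) step dotpNr dotpZr -/gd opprK norm2N norm2Z.
rewrite (gtr0_norm gamma_gt0) ler_pdivlMr ?exprn_gt0 ?mulr_gt0 // -mulrA ler_pM2l //.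
exact: le_trans decrease (ler_norm _).
Qed.

Lemma rejected_not_Iset eta t : eta < 2 -> 0 < gamma t -> ~~ accepted t -> ~ Iset eta Lt t.
Proof.
move=> eta_lt2 gamma_gt0 rej; apply/negP; rewrite -ltNge LtS lt_max.
by rewrite (lt_le_trans _ (rejected_ell_ge gamma_gt0 rej)) // ltr_pM2r // Lt_gt0.
Qed.

Definition nactive t : nat := count (fun w => 0 < alpha t w) (atoms t).

Definition drop_step t : bool := ~~ fw_step t && accepted t && ~~ `[< Gset gmax gamma t >].

Lemma nactive0 : nactive 0 = 1%N.
Proof. by rewrite /nactive /= alpha0E eqxx ltr01. Qed.

Lemma nactive_gt0 t : (0 < nactive t)%N.
Proof.
have [_ _ ge0 sum1 _] := weights_invariant t.
rewrite /nactive -has_count; apply: contraT => /hasPn alpha_le0.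
suff : \sum_(w <- atoms t) alpha t w = 0 by rewrite sum1 => /eqP; rewrite oner_eq0.
rewrite big_seq big1 // => w /alpha_le0; rewrite -leNgt => a_le0.
by apply/eqP; rewrite eq_le a_le0 ge0.
Qed.

Lemma nactiveS t : (nactive t.+1 + drop_step t <= nactive t + fw_step t)%N.
Proof.
have inv_t := weights_invariant t.
have nactive_atomsS : count (fun w => 0 < alpha t w) (atoms t.+1) = nactive t.
  by apply: count_atomsS => /(weight_out inv_t) ->; rewrite ltxx.
rewrite -nactive_atomsS /nactive.
have [acc|rej] := boolP (accepted t); last first.
  have -> : alpha t.+1 = alpha t by rewrite alphaS (negbTE rej).
  by rewrite /drop_step (negbTE rej) andbF addn0 leq_addr.
have -> : alpha t.+1 = next_weights t (gamma t) by rewrite alphaS acc.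
have [fw|away] := boolP (fw_step t).
  have -> : drop_step t = false by rewrite /drop_step fw.
  rewrite addn0 addn1; apply: (count_le_predU1 (u := v t)) (atoms_uniq _) _ => w.
  exact: next_weights_gt0_fw.
rewrite addn0 /drop_step away acc /= -/(atoms t.+1).
have [G|notG] := asboolP (Gset gmax gamma t).
  by rewrite addn0; apply: sub_count => w; exact: next_weights_gt0_away.
rewrite addn1; apply: count_lt_predD1 (atoms_uniq _) _ (s_argmax t).1 _.
  exact/atoms_subS/s_in_atoms.
move=> w pos; split; first exact: next_weights_gt0_away pos.
by apply: contraTneq pos => ->; rewrite next_weights_drop // ltxx.
Qed.

Lemma twice_drops_le T : (2 * \sum_(k < T) drop_step k <= T)%N.
Proof.
apply: (twice_sum_down_le (N := nactive) (up := fw_step)).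
- by rewrite nactive0.
- exact: nactive_gt0.
- by move=> t; rewrite /drop_step; case: (fw_step t).
- exact: nactiveS.
Qed.

Lemma step_cases eta t : eta < 2 ->
  (Gset gmax gamma t /\ Iset eta Lt t) \/ drop_step t \/ ~ Iset eta Lt t.
Proof.
move=> eta_lt2; have [G|notG] := asboolP (Gset gmax gamma t).
  by have [I|notI] := asboolP (Iset eta Lt t); [left | right; right].
have [fw as_lt1 gammaD] := notG_away_drop notG.
have gamma_gt0 : 0 < gamma t.
  by rewrite gammaD divr_gt0 ?subr_gt0 ?(s_argmax t).1.
right; have [acc|rej] := boolP (accepted t); [left | right].
  by rewrite /drop_step fw acc asboolF.
exact: rejected_not_Iset eta_lt2 gamma_gt0 rej.
Qed.

Lemma Lt_le_L t : Lt t <= L.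
Proof.
have Lt0_le : Lt 0%N <= L.
  have [eq|neq] := eqVneq xm1 (x 0%N).
    by move: Lt0_gt0; rewrite Lt0E eq /ell eqxx ltxx.
  by rewrite Lt0E; exact: (ell_le_lipschitz f_grad grad_lip neq).
elim: t => // t IH; rewrite LtS ge_max; apply/andP; split.
  have [eq|neq] := eqVneq (x t) (xbar t).
    by rewrite eq /ell eqxx (le_trans (ltW Lt0_gt0)).
  exact: (ell_le_lipschitz f_grad grad_lip neq).
have /andP[rr_gt0 rr_le1] := rr01 t.
by apply: le_trans IH; rewrite ler_piMl // ltW // Lt_gt0.
Qed.

Lemma count_notIset_le (eta r : R) T : 1 < eta ->
  (fun t => \prod_(k < t) rr k) @ \oo --> r -> 0 < r ->
  ((\sum_(k < T) (~~ `[< Iset eta Lt k >] : nat))%:R : R)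
    <= (Num.floor (ln (L / (r * Lt 0%N)) / ln eta))%:~R.
Proof.
move=> eta_gt1 prod_cvg r_gt0.
have rr01' t : 0 <= rr t <= 1 by have /andP[/ltW -> ->] := rr01 t.
apply: (natr_le_floor_log eta_gt1).
rewrite ler_pdivlMr ?mulr_gt0 // mulrA; apply: le_trans (Lt_le_L T).
apply: le_trans (Iset_growth (ltW eta_gt1) rr01' (fun t => ltW (Lt_gt0 t)) _ T).
  by rewrite ler_pM2r // ler_pM2l ?exprn_gt0 ?(lt_trans ltr01) ?prod_ge_lim.
by move=> t; rewrite LtS le_max lexx orbT.
Qed.

Lemma count_Gset_Iset_ge (eta r : R) t : 1 < eta < 2 ->
  (fun t => \prod_(k < t) rr k) @ \oo --> r -> 0 < r ->
  ((\sum_(k < t.+1) (`[< Gset gmax gamma k /\ Iset eta Lt k >] : nat))%:R : R)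
    >= (t.+1)%:R / 2 - (Num.floor (ln (L / (r * Lt 0%N)) / ln eta))%:~R.
Proof.
move=> /andP[eta_gt1 eta_lt2] prod_cvg r_gt0.
set C := \sum_(k < t.+1) _; set D := \sum_(k < t.+1) (drop_step k : nat).
set M := \sum_(k < t.+1) (~~ `[< Iset eta Lt k >] : nat).
have cover : (t.+1 <= C + D + M)%N.
  rewrite /C /D /M -!big_split /= -[X in (X <= _)%N]card_ord -sum1_card.
  apply: leq_sum => k _.
  case: (step_cases k eta_lt2) => [GI|[drop|notI]].
  - by rewrite (asboolT GI).
  - by rewrite drop addn1 addSn.
  - by rewrite (asboolF notI) addn1.
have twiceD : (2 * D <= t.+1)%N := twice_drops_le t.+1.
have M_le := count_notIset_le t.+1 eta_gt1 prod_cvg r_gt0; rewrite -/M in M_le.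
have coverR : (t.+1%:R : R) <= C%:R + D%:R + M%:R by rewrite -!natrD ler_nat.
have twiceDR : (2 * D%:R : R) <= t.+1%:R by rewrite -[2]/(2%:R) -natrM ler_nat.
lra.
Qed.

Lemma Gset_infinitely_often (eta r : R) : 1 < eta < 2 ->
  (fun t => \prod_(k < t) rr k) @ \oo --> r -> 0 < r ->
  forall N, exists2 t, (N <= t)%N & Gset gmax gamma t.
Proof.
move=> eta12 prod_cvg r_gt0 N.
have density t := count_Gset_Iset_ge t eta12 prod_cvg r_gt0.
pose GI k := Gset gmax gamma k /\ Iset eta Lt k.
by have [t Nt [G _]] := infinitely_often_of_density (P := GI) density N; exists t.
Qed.

End AwayStepFrankWolfe.

Unset Implicit Arguments.

Theorem lemma8 (R : realType) (n : nat) (A : set 'rV[R]_n)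
  (f : 'rV[R]_n -> R) (grad : 'rV[R]_n -> 'rV[R]_n) (L eta r : R)
  (rr : nat -> R) (xm1 : 'rV[R]_n) (x v s d xbar : nat -> 'rV[R]_n)
  (gmax : nat -> \bar R) (gamma Lt : nat -> R) (alpha : nat -> 'rV[R]_n -> R) :
  compact A ->
  is_gradient f grad ->
  (forall y z, norm2 (grad y - grad z) <= L * norm2 (y - z)) ->
  1 < eta < 2 ->
  (* Condition (D) *)
  (forall t, 0 < rr t <= 1) ->
  (fun t => \prod_(k < t) rr k) @ \oo --> r ->
  0 < r <= 1 ->
  AC_AFW_run A f grad rr xm1 x v s d xbar gmax gamma Lt alpha ->
  0 < Lt 0%N ->
  [/\ (* Condition (S)(i) *)
      (forall t, norm2 (d t) <= diam A /\
         (forall g : R, 0 <= g -> (g%:E <= gmax t)%E -> convhull A (x t - g *: d t))),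
      (* Condition (S)(ii) *)
      (forall N, exists2 t, (N <= t)%N & Gset gmax gamma t),
      (* quantitative bound *)
      (forall t : nat,
         ((\sum_(k < t.+1) (`[< Gset gmax gamma k /\ Iset eta Lt k >] : nat))%:R : R)
         >= (t.+1)%:R / 2 - (Num.floor (ln (L / (r * Lt 0%N)) / ln eta))%:~R) &
      (* Condition (S)(iii) with R = 1, for convex f *)
      (convex_fun f -> forall xstar, convhull A xstar ->
         (forall y, convhull A y -> f xstar <= f y) ->
         forall t, dotp (grad (x t)) (d t) >= f (x t) - f xstar)].
Proof.
move=> A_cpt f_grad grad_lip eta12 rr01 prod_cvg /andP[r_gt0 _] run Lt0_gt0; split.
- move=> t; split; first exact: norm2_d_le_diam run rr01 Lt0_gt0 t A_cpt.
  by move=> g g_ge0 g_le; exact: step_in_convhull run rr01 Lt0_gt0 _ _ g_ge0 g_le.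
- exact: Gset_infinitely_often run rr01 Lt0_gt0 f_grad _ grad_lip _ _ eta12 prod_cvg r_gt0.
- by move=> t; exact: count_Gset_Iset_ge run rr01 Lt0_gt0 f_grad _ grad_lip _ _ t eta12 prod_cvg r_gt0.
- by move=> f_cvx xs xs_hull _ t; exact: gap_le_dotp_grad_d run f_grad t _ f_cvx xs_hull.
Qed.
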